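(* Let $p\ge1$, $l\in\mathbb{Z}_{\ge0}$, and $s_1,\dots,s_p\in\mathbb{C}$ with $|s_i|<1$ or $s_i=1$ for every $1\le i\le p$. Then for every $\varepsilon>0$, $(\Delta^l\mathtt{c}_{s_1,\dots,s_p,0})(m)=O\bigl(m^{-(l+1-\varepsilon)}\bigr)$ as $m\to\infty$.
   Context: Convention $0^0=1$. For $u_1,\dots,u_q\in\mathbb{C}$, $\mathtt{c}_{u_1,\dots,u_q}(m)=\sum_{m=m_1\ge\cdots\ge m_q\ge0}\frac{u_1^{m_1-m_2}\cdots u_{q-1}^{m_{q-1}-m_q}}{(m_1+1)\cdots(m_{q-1}+1)}u_q^{m_q}$; here $q=p+1$ and $u_{p+1}=0$. $(\Delta a)(m)=a(m)-a(m+1)$. *)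

From Stdlib Require Import Reals List.
From Coquelicot Require Import Coquelicot.
Open Scope R_scope.

Fixpoint cpow (z : C) (n : nat) : C :=
  match n with
  | O => 1%C
  | S k => Cmult z (cpow z k)
  end.

(* c_{u_1,...,u_q}(m) defined by recursion on the list [u_1;...;u_q]:
   c_{[u]}(m) = u^m,
   c_{u_1 :: us}(m) = sum_{m_2=0}^{m} u_1^{m-m_2}/(m+1) * c_{us}(m_2).
   This unfolds exactly to
   sum_{m=m_1>=...>=m_q>=0} prod_{i<q} u_i^{m_i-m_{i+1}}/(m_i+1) * u_q^{m_q}.
   (The empty list gives 0; it is never used.) *)
Fixpoint csum (f : nat -> C) (n : nat) : C :=
  match n with
  | O => f O
  | S k => Cplus (csum f k) (f (S k))
  end.

Fixpoint cseq (us : list C) (m : nat) : C :=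
  match us with
  | nil => 0%C
  | u :: nil => cpow u m
  | u :: us' =>
      csum (fun m2 => Cmult (Cmult (cpow u (m - m2)) (RtoC (/ INR (S m))))
                            (cseq us' m2)) m
  end.

Definition Delta (a : nat -> C) : nat -> C := fun m => Cminus (a m) (a (S m)).
Definition Deltan (l : nat) (a : nat -> C) : nat -> C := Nat.iter l Delta a.

From Stdlib Require Import Reals List Lra Lia Psatz.
From Coquelicot Require Import Coquelicot.
Open Scope R_scope.

(* Write [T_u a (m) = (m+1)^-1 sum_(k<=m) u^(m-k) a(k)], so that c_(u::s) = T_u c_s,
   and c_(0) is the indicator of [m = 0].  One shows by induction on the list that
   [Delta^j c_s (m) = O(H_m^|s| / (m+1)^(j+1))] for every j.  The unnormalised
   convolution [B = (m+1) T_u a] satisfies [B(m+1) = u B(m) + a(m+1)], a recurrence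
   that commutes with Delta: for |u| < 1 this geometric filter keeps the decay rate
   of [Delta^j a]; for u = 1, [B] is a partial sum, costing one harmonic factor at
   j = 0, while [Delta^(j+1) B = - Delta^j a(. + 1)].  The Leibniz rule for
   [Delta^j ((m+1) T)] then gains one power of (m+1) back for [T].  Finally
   [H_m^d = O(m^eps)]. *)

Lemma INR_S_pos n : 0 < INR (S n).
Proof. apply lt_0_INR; lia. Qed.

Lemma INR_S_ge1 n : 1 <= INR (S n).
Proof. rewrite S_INR; pose proof (pos_INR n); lra. Qed.

Lemma ln_le_sub_1 x : 0 < x -> ln x <= x - 1.
Proof. intros Hx. pose proof (exp_ineq1_le (ln x)) as E. rewrite exp_ln in E; lra. Qed.

(* [harm m] is the harmonic number H_(m+1), so that [harm 0 = 1]. *)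
Definition harm (m : nat) : R := sum_f_R0 (fun k => / INR (S k)) m.

Lemma harm_S m : harm (S m) = harm m + / INR (S (S m)).
Proof. reflexivity. Qed.

Lemma harm_le_S m : harm m <= harm (S m).
Proof. rewrite harm_S. pose proof (Rinv_0_lt_compat _ (INR_S_pos (S m))). lra. Qed.

Lemma harm_ge1 m : 1 <= harm m.
Proof.
  induction m as [|m IH]; [unfold harm; simpl; lra|].
  pose proof (harm_le_S m); lra.
Qed.

Lemma harm_monotone k m : (k <= m)%nat -> harm k <= harm m.
Proof. induction 1; [lra|]. pose proof (harm_le_S m); lra. Qed.

Lemma harm_S_le_double m : harm (S m) <= 2 * harm m.
Proof.
  rewrite harm_S. pose proof (harm_ge1 m).
  assert (/ INR (S (S m)) <= 1).
  { rewrite <- Rinv_1. apply Rinv_le_contravar; [lra | apply INR_S_ge1]. }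
  lra.
Qed.

Lemma harm_le_1_ln m : harm m <= 1 + ln (INR (S m)).
Proof.
  induction m as [|m IH]; [unfold harm; simpl; rewrite ln_1; lra|].
  rewrite harm_S.
  (* ln((m+1)/(m+2)) <= (m+1)/(m+2) - 1 = -1/(m+2) *)
  assert (/ INR (S (S m)) <= ln (INR (S (S m))) - ln (INR (S m))).
  { pose proof (INR_S_pos m) as Ha. rewrite (S_INR (S m)).
    set (a := INR (S m)) in *.
    assert (Hq : ln (a * / (a + 1)) <= a * / (a + 1) - 1).
    { apply ln_le_sub_1, Rmult_lt_0_compat; [lra | apply Rinv_0_lt_compat; lra]. }
    rewrite ln_mult, ln_Rinv in Hq by (try apply Rinv_0_lt_compat; lra).
    replace (a * / (a + 1) - 1) with (- / (a + 1)) in Hq by (field; lra).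
    lra. }
  lra.
Qed.

Definition decay (d r m : nat) : R := harm m ^ d / INR (S m) ^ r.

Definition bigO (f g : nat -> R) : Prop :=
  exists K, 0 <= K /\ forall m, f m <= K * g m.

Lemma bigO_trans f g h : bigO f g -> bigO g h -> bigO f h.
Proof.
  intros [K1 [HK1 H1]] [K2 [HK2 H2]]. exists (K1 * K2). split; [nra|].
  intros m. specialize (H1 m). specialize (H2 m). nra.
Qed.

Lemma bigO_le f1 f2 g : (forall m, f1 m <= f2 m) -> bigO f2 g -> bigO f1 g.
Proof. intros H [K [HK Hf]]. exists K. split; auto. intros m. specialize (H m); specialize (Hf m); lra. Qed.

Lemma bigO_plus f1 f2 g : bigO f1 g -> bigO f2 g -> bigO (fun m => f1 m + f2 m) g.
Proof.
  intros [K1 [HK1 H1]] [K2 [HK2 H2]]. exists (K1 + K2). split; [lra|].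
  intros m. specialize (H1 m). specialize (H2 m). lra.
Qed.

Lemma bigO_scal c f g : 0 <= c -> bigO f g -> bigO (fun m => c * f m) g.
Proof.
  intros Hc [K [HK H]]. exists (c * K). split; [nra|].
  intros m. specialize (H m). nra.
Qed.

Lemma bigO_shift f g : bigO f g -> bigO (fun m => g (S m)) g -> bigO (fun m => f (S m)) g.
Proof. intros Hf Hg. apply (bigO_trans _ (fun m => g (S m))); auto.
  destruct Hf as [K [HK H]]. exists K. split; auto. Qed.

Lemma decay_pos d r m : 0 < decay d r m.
Proof.
  unfold decay, Rdiv. pose proof (harm_ge1 m).
  apply Rmult_lt_0_compat; [apply pow_lt; lra | apply Rinv_0_lt_compat, pow_lt, INR_S_pos].
Qed.

Lemma decay_0 d r : decay d r 0 = 1.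
Proof. unfold decay, harm; simpl. rewrite Rinv_1, !pow1. field. Qed.

Lemma decay_S_r d r m : decay d (S r) m = decay d r m / INR (S m).
Proof.
  unfold decay. rewrite <- tech_pow_Rmult. pose proof (INR_S_pos m).
  field. split; [apply pow_nonzero|]; lra.
Qed.

Lemma bigO_decay_S_d d r : bigO (decay d r) (decay (S d) r).
Proof.
  exists 1. split; [lra|]. intros m. rewrite Rmult_1_l. unfold decay, Rdiv.
  apply Rmult_le_compat_r; [apply Rlt_le, Rinv_0_lt_compat, pow_lt, INR_S_pos|].
  pose proof (harm_ge1 m). apply Rle_pow; [lra | lia].
Qed.

Lemma bigO_decay_S_r d r : bigO (decay d (S r)) (decay d r).
Proof.
  exists 1. split; [lra|]. intros m. rewrite Rmult_1_l, decay_S_r.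
  pose proof (decay_pos d r m). pose proof (INR_S_ge1 m).
  unfold Rdiv. rewrite <- (Rmult_1_r (decay d r m)) at 2.
  apply Rmult_le_compat_l; [lra|]. rewrite <- Rinv_1. apply Rinv_le_contravar; lra.
Qed.

Lemma bigO_decay_shift d r : bigO (fun m => decay d r (S m)) (decay d r).
Proof.
  exists (2 ^ d). split; [apply pow_le; lra|]. intros m. unfold decay, Rdiv.
  rewrite <- Rmult_assoc, <- Rpow_mult_distr.
  apply Rmult_le_compat.
  - pose proof (harm_ge1 (S m)). apply pow_le; lra.
  - apply Rlt_le, Rinv_0_lt_compat, pow_lt, INR_S_pos.
  - pose proof (harm_ge1 (S m)). apply pow_incr. split; [lra | apply harm_S_le_double].
  - apply Rinv_le_contravar; [apply pow_lt, INR_S_pos|].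
    apply pow_incr. split; [apply pos_INR | apply le_INR; lia].
Qed.

Lemma decay_telescope d m : decay (S d) 0 m + decay d 1 (S m) <= decay (S d) 0 (S m).
Proof.
  unfold decay. rewrite !pow_O, pow_1, !Rdiv_1_r, harm_S, <- !tech_pow_Rmult.
  unfold Rdiv. set (h := / INR (S (S m))).
  assert (0 <= h) by (apply Rlt_le, Rinv_0_lt_compat, INR_S_pos).
  pose proof (harm_ge1 m).
  assert (harm m ^ d <= (harm m + h) ^ d) by (apply pow_incr; lra).
  nra.
Qed.

Lemma geometric_sum_le s n : 0 <= s < 1 -> sum_f_R0 (pow s) n <= / (1 - s).
Proof.
  intros Hs. rewrite tech3 by lra. unfold Rdiv.
  rewrite <- (Rmult_1_l (/ (1 - s))) at 2.
  apply Rmult_le_compat_r; [apply Rlt_le, Rinv_0_lt_compat; lra|].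
  pose proof (pow_le s (S n)); lra.
Qed.

Lemma pow_mul_INR_S_le s n : 0 <= s < 1 -> s ^ n * INR (S n) <= / (1 - s).
Proof.
  intros Hs. rewrite <- sum_cte. eapply Rle_trans; [|apply (geometric_sum_le s n Hs)].
  apply sum_Rle. intros k Hk. replace n with (k + (n - k))%nat by lia.
  rewrite pow_add. rewrite <- (Rmult_1_r (s ^ k)) at 2.
  apply Rmult_le_compat_l; [apply pow_le; lra|].
  rewrite <- (pow1 (n - k)). apply pow_incr; lra.
Qed.

(* Each extra polynomial factor is absorbed by passing from [t] to [sqrt t]. *)
Lemma geometric_dominates_poly r q : 0 <= q < 1 ->
  exists A t, 0 <= A /\ 0 <= t < 1 /\ forall n, q ^ n * INR (S n) ^ r <= A * t ^ n.
Proof.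
  revert q. induction r as [|r IH]; intros q Hq.
  - exists 1, q. repeat split; try lra. intros n. simpl. lra.
  - destruct (IH q Hq) as (A & t & HA & Ht & Hqt).
    set (s := sqrt t).
    assert (Hs : 0 <= s < 1).
    { split; [apply sqrt_pos|]. rewrite <- sqrt_1. apply sqrt_lt_1; lra. }
    assert (Hts : forall n, t ^ n = s ^ n * s ^ n).
    { intros n. rewrite <- Rpow_mult_distr. unfold s. rewrite sqrt_sqrt; lra. }
    exists (A / (1 - s)), s. split; [apply Rdiv_le_0_compat; lra|]. split; [exact Hs|].
    intros n. specialize (Hqt n).
    pose proof (pow_mul_INR_S_le s n Hs) as Hsn.
    pose proof (INR_S_pos n). pose proof (pow_le s n (proj1 Hs)).
    rewrite <- tech_pow_Rmult, Hts in *.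
    apply Rle_trans with (A * (s ^ n * s ^ n) * INR (S n)).
    + replace (q ^ n * (INR (S n) * INR (S n) ^ r)) with (q ^ n * INR (S n) ^ r * INR (S n))
        by ring.
      apply Rmult_le_compat_r; lra.
    + replace (A * (s ^ n * s ^ n) * INR (S n)) with (A * s ^ n * (s ^ n * INR (S n))) by ring.
      replace (A / (1 - s) * s ^ n) with (A * s ^ n * / (1 - s)) by (unfold Rdiv; ring).
      apply Rmult_le_compat_l; [nra | exact Hsn].
Qed.

Lemma sum_geom_kernel_S q f m :
  sum_f_R0 (fun k => q ^ (S m - k) * f k) (S m) =
  q * sum_f_R0 (fun k => q ^ (m - k) * f k) m + f (S m).
Proof.
  change (sum_f_R0 ?g (S m)) with (sum_f_R0 g m + g (S m)).
  cbv beta. rewrite Nat.sub_diag, pow_O, Rmult_1_l, scal_sum. f_equal.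
  apply sum_eq. intros k Hk. replace (S m - k)%nat with (S (m - k)) by lia.
  rewrite <- tech_pow_Rmult. ring.
Qed.

Lemma geom_filter_le q G f : 0 <= q -> G 0%nat <= f 0%nat ->
  (forall m, G (S m) <= q * G m + f (S m)) ->
  forall m, G m <= sum_f_R0 (fun k => q ^ (m - k) * f k) m.
Proof.
  intros Hq H0 HS m. induction m as [|m IH]; [simpl; lra|].
  rewrite sum_geom_kernel_S. specialize (HS m).
  assert (q * G m <= q * sum_f_R0 (fun k => q ^ (m - k) * f k) m)
    by (apply Rmult_le_compat_l; auto).
  lra.
Qed.

(* Since [m+1 <= (k+1)(m-k+1)], the weight lost at [k] is recovered by [q ^ (m-k)]. *)
Lemma bigO_geom_conv_decay q d r : 0 <= q < 1 ->
  bigO (fun m => sum_f_R0 (fun k => q ^ (m - k) * decay d r k) m) (decay d r).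
Proof.
  intros Hq. destruct (geometric_dominates_poly r q Hq) as (A & t & HA & Ht & Hqt).
  exists (A / (1 - t)). split; [apply Rdiv_le_0_compat; lra|]. intros m.
  assert (Hterm : forall k, (k <= m)%nat ->
    q ^ (m - k) * decay d r k <= t ^ (m - k) * (A * decay d r m)).
  { intros k Hk. set (n := (m - k)%nat).
    assert (Hprod : INR (S m) ^ r <= INR (S k) ^ r * INR (S n) ^ r).
    { rewrite <- Rpow_mult_distr, <- mult_INR. apply pow_incr.
      split; [apply pos_INR | apply le_INR; unfold n; nia]. }
    pose proof (Hqt n) as Hn.
    pose proof (pow_le q n (proj1 Hq)). pose proof (pow_le t n (proj1 Ht)).
    pose proof (pow_lt _ r (INR_S_pos k)). pose proof (pow_lt _ r (INR_S_pos m)).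
    assert (Hshift : q ^ n * INR (S m) ^ r <= A * t ^ n * INR (S k) ^ r) by nra.
    assert (Hharm : harm k ^ d <= harm m ^ d).
    { pose proof (harm_ge1 k). apply pow_incr. split; [lra | apply harm_monotone, Hk]. }
    pose proof (harm_ge1 k). assert (0 <= harm k ^ d) by (apply pow_le; lra).
    unfold decay, Rdiv.
    apply (Rmult_le_reg_r (INR (S k) ^ r * INR (S m) ^ r)); [nra|].
    replace (q ^ n * (harm k ^ d * / INR (S k) ^ r) * (INR (S k) ^ r * INR (S m) ^ r))
      with (harm k ^ d * (q ^ n * INR (S m) ^ r)) by (field; lra).
    replace (t ^ n * (A * (harm m ^ d * / INR (S m) ^ r)) * (INR (S k) ^ r * INR (S m) ^ r))
      with (harm m ^ d * (A * t ^ n * INR (S k) ^ r)) by (field; lra).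
    apply Rmult_le_compat; nra. }
  eapply Rle_trans; [apply sum_Rle, Hterm|].
  rewrite <- scal_sum, (sum_f_R0_skip (pow t)).
  pose proof (geometric_sum_le t m Ht). pose proof (decay_pos d r m).
  replace (A / (1 - t) * decay d r m) with (A * decay d r m * / (1 - t)) by (unfold Rdiv; ring).
  apply Rmult_le_compat_l; [nra | assumption].
Qed.

Lemma bigO_geom_filter q G F d r : 0 <= q < 1 ->
  (forall m, G (S m) <= q * G m + F (S m)) ->
  bigO F (decay d r) -> bigO G (decay d r).
Proof.
  intros Hq HG [K [HK HF]].
  set (K0 := Rmax K (G 0%nat)).
  assert (HK0 : K <= K0) by apply Rmax_l.
  apply (bigO_le _ (fun m => K0 * sum_f_R0 (fun k => q ^ (m - k) * decay d r k) m)).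
  - intros m. rewrite scal_sum.
    eapply Rle_trans.
    + apply (geom_filter_le q G (fun k => K0 * decay d r k)); [lra| |].
      * rewrite decay_0, Rmult_1_r. apply Rmax_r.
      * intros k. specialize (HG k). specialize (HF (S k)).
        pose proof (decay_pos d r (S k)). nra.
    + right. apply sum_eq. intros k _. ring.
  - apply bigO_scal; [lra|]. apply bigO_geom_conv_decay, Hq.
Qed.

Lemma bigO_partial_sum G F d : (forall m, G (S m) <= G m + F (S m)) ->
  bigO F (decay d 1) -> bigO G (decay (S d) 0).
Proof.
  intros HG [K [HK HF]]. set (K0 := Rmax K (G 0%nat)).
  assert (HK0 : K <= K0) by apply Rmax_l.
  exists K0. split; [lra|]. intros m. induction m as [|m IH].
  - rewrite decay_0, Rmult_1_r. apply Rmax_r.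
  - specialize (HG m). specialize (HF (S m)).
    pose proof (decay_telescope d m). pose proof (decay_pos d 1 (S m)). nra.
Qed.

Lemma bigO_div_INR_S f d r : bigO f (decay d r) ->
  bigO (fun m => f m / INR (S m)) (decay d (S r)).
Proof.
  intros [K [HK Hf]]. exists K. split; [exact HK|]. intros m.
  rewrite decay_S_r. unfold Rdiv. rewrite <- Rmult_assoc.
  apply Rmult_le_compat_r; [apply Rlt_le, Rinv_0_lt_compat, INR_S_pos | apply Hf].
Qed.

Lemma Deltan_S j (a : nat -> C) m : Deltan (S j) a m = (Deltan j a m - Deltan j a (S m))%C.
Proof. reflexivity. Qed.

Lemma Deltan_recurrence (u : C) (g f : nat -> C) :
  (forall m, g (S m) = u * g m + f (S m))%C ->
  forall j m, Deltan j g (S m) = (u * Deltan j g m + Deltan j f (S m))%C.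
Proof.
  intros H j. induction j as [|j IH]; intros m; [apply H|].
  rewrite !Deltan_S, !IH. ring.
Qed.

Lemma Deltan_mul_INR_S (b c : nat -> C) :
  (forall m, b m = RtoC (INR (S m)) * c m)%C ->
  forall j m, Deltan (S j) b m =
    (RtoC (INR (S m)) * Deltan (S j) c m - RtoC (INR (S j)) * Deltan j c (S m))%C.
Proof.
  intros H j. induction j as [|j IH]; intros m.
  - rewrite !Deltan_S. change (Deltan 0 ?a) with a. rewrite !H.
    rewrite (S_INR (S m)), RtoC_plus. change (INR 1) with 1. ring.
  - rewrite (Deltan_S (S j) b m), !IH.
    rewrite (Deltan_S (S j) c m), (Deltan_S j c (S m)).
    rewrite (S_INR (S m)), (S_INR (S j)), !RtoC_plus. ring.
Qed.

Lemma Deltan_vanish (a : nat -> C) : (forall k, a (S k) = 0%C) -> forall j m, Deltan j a (S m) = 0%C.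
Proof.
  intros Ha j. induction j as [|j IH]; intros m; [apply Ha|].
  rewrite Deltan_S, !IH. ring.
Qed.

Lemma csum_ext (f g : nat -> C) n : (forall k, (k <= n)%nat -> f k = g k) -> csum f n = csum g n.
Proof.
  induction n as [|n IH]; intros H; simpl; [apply H; lia|].
  rewrite IH, H; auto.
Qed.

Lemma csum_mult_l (c : C) (f : nat -> C) n : csum (fun k => c * f k)%C n = (c * csum f n)%C.
Proof. induction n as [|n IH]; simpl; [reflexivity|]. rewrite IH. ring. Qed.

Definition geom_conv (u : C) (a : nat -> C) (m : nat) : C :=
  csum (fun k => cpow u (m - k) * a k)%C m.

Definition avg_geom_conv (u : C) (a : nat -> C) (m : nat) : C :=
  csum (fun k => cpow u (m - k) * RtoC (/ INR (S m)) * a k)%C m.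

Lemma cseq_app_zero u s :
  cseq ((u :: s) ++ RtoC 0 :: nil) = avg_geom_conv u (cseq (s ++ RtoC 0 :: nil)).
Proof. destruct s; reflexivity. Qed.

Lemma geom_conv_S u a m : geom_conv u a (S m) = (u * geom_conv u a m + a (S m))%C.
Proof.
  unfold geom_conv. change (csum ?f (S m)) with (csum f m + f (S m))%C.
  cbv beta. rewrite Nat.sub_diag, <- csum_mult_l. change (cpow u 0) with (RtoC 1).
  rewrite Cmult_1_l. f_equal. apply csum_ext. intros k Hk.
  replace (S m - k)%nat with (S (m - k)) by lia. simpl. ring.
Qed.

Lemma geom_conv_avg u a m : geom_conv u a m = (RtoC (INR (S m)) * avg_geom_conv u a m)%C.
Proof.
  unfold geom_conv, avg_geom_conv. rewrite <- csum_mult_l. apply csum_ext. intros k _.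
  pose proof (INR_S_pos m).
  replace (RtoC (INR (S m)) * (cpow u (m - k) * RtoC (/ INR (S m)) * a k))%C
    with (RtoC (INR (S m) * / INR (S m)) * (cpow u (m - k) * a k))%C
    by (rewrite RtoC_mult; ring).
  rewrite Rinv_r by lra. ring.
Qed.

Definition has_decay (d : nat) (a : nat -> C) : Prop :=
  forall j, bigO (fun m => Cmod (Deltan j a m)) (decay d (S j)).

Lemma bigO_Deltan_geom_conv u a d : (Cmod u < 1 \/ u = RtoC 1) -> has_decay d a ->
  forall j, bigO (fun m => Cmod (Deltan j (geom_conv u a) m)) (decay (S d) j).
Proof.
  intros Hu Ha j. pose proof (Deltan_recurrence u _ a (geom_conv_S u a)) as Hrec.
  destruct Hu as [Hu | ->].
  - apply (bigO_trans _ (decay d j)); [|apply bigO_decay_S_d].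
    apply (bigO_geom_filter (Cmod u) _ (fun m => Cmod (Deltan j a m))).
    + split; [apply Cmod_ge_0 | exact Hu].
    + intros m. rewrite Hrec, <- Cmod_mult. apply Cmod_triangle.
    + apply (bigO_trans _ _ _ (Ha j)), bigO_decay_S_r.
  - destruct j as [|j].
    + apply (bigO_partial_sum _ (fun m => Cmod (a m))); [|exact (Ha 0%nat)].
      intros m. change (Deltan 0 ?b) with b.
      rewrite geom_conv_S, Cmult_1_l. apply Cmod_triangle.
    + apply (bigO_trans _ (decay d (S j))); [|apply bigO_decay_S_d].
      apply (bigO_le _ (fun m => Cmod (Deltan j a (S m)))).
      * intros m. rewrite Deltan_S, Hrec, Cmult_1_l, <- Cmod_opp. right. f_equal. ring.
      * apply (bigO_shift (fun m => Cmod (Deltan j a m))); [apply Ha | apply bigO_decay_shift].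
Qed.

Lemma has_decay_avg_geom_conv u a d : (Cmod u < 1 \/ u = RtoC 1) -> has_decay d a ->
  has_decay (S d) (avg_geom_conv u a).
Proof.
  intros Hu Ha. pose proof (bigO_Deltan_geom_conv u a d Hu Ha) as Hconv.
  pose proof (Deltan_mul_INR_S _ _ (geom_conv_avg u a)) as Hleib.
  intros j. induction j as [|j IH].
  - apply (bigO_le _ (fun m => Cmod (geom_conv u a m) / INR (S m))).
    + intros m. change (Deltan 0 ?b) with b. pose proof (INR_S_pos m).
      rewrite geom_conv_avg, Cmod_mult, Cmod_R, Rabs_pos_eq by lra.
      right. field. lra.
    + apply bigO_div_INR_S, (Hconv 0%nat).
  - apply (bigO_le _ (fun m => (Cmod (Deltan (S j) (geom_conv u a) m)
                               + INR (S j) * Cmod (Deltan j (avg_geom_conv u a) (S m)))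
                               / INR (S m))).
    + intros m. pose proof (INR_S_pos m). pose proof (pos_INR (S j)).
      apply (Rmult_le_reg_l (INR (S m))); [lra|].
      replace (INR (S m) * (_ / INR (S m))) with
        (Cmod (Deltan (S j) (geom_conv u a) m)
         + INR (S j) * Cmod (Deltan j (avg_geom_conv u a) (S m))) by (field; lra).
      rewrite <- (Rabs_pos_eq (INR (S m))), <- (Rabs_pos_eq (INR (S j))) by lra.
      rewrite <- !Cmod_R, <- !Cmod_mult, Hleib.
      eapply Rle_trans; [|apply Cmod_triangle]. right. f_equal. ring.
    + apply bigO_div_INR_S, bigO_plus; [apply Hconv|].
      apply bigO_scal; [apply pos_INR|].
      apply (bigO_shift (fun m => Cmod (Deltan j (avg_geom_conv u a) m)));
        [apply IH | apply bigO_decay_shift].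
Qed.

Lemma has_decay_cseq_zero : has_decay 0 (cseq (RtoC 0 :: nil)).
Proof.
  intros j. exists (Cmod (Deltan j (cseq (RtoC 0 :: nil)) 0)). split; [apply Cmod_ge_0|].
  intros [|m].
  - rewrite decay_0. lra.
  - rewrite Deltan_vanish, Cmod_0.
    + apply Rmult_le_pos; [apply Cmod_ge_0 | apply Rlt_le, decay_pos].
    + intros k. simpl. ring.
Qed.

Lemma has_decay_cseq s : (forall si, In si s -> Cmod si < 1 \/ si = RtoC 1) ->
  has_decay (length s) (cseq (s ++ RtoC 0 :: nil)).
Proof.
  induction s as [|u s IH]; intros Hs; [apply has_decay_cseq_zero|].
  rewrite cseq_app_zero. apply has_decay_avg_geom_conv.
  - apply Hs. left. reflexivity.
  - apply IH. intros si Hsi. apply Hs. right. exact Hsi.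
Qed.

(* From [delta * ln x = ln (x^delta) <= x^delta - 1]. *)
Lemma harm_le_Rpower delta m : 0 < delta -> (1 <= m)%nat ->
  harm m <= (2 + / delta) * Rpower (INR m) delta.
Proof.
  intros Hdelta Hm. set (x := INR m).
  assert (Hx : 1 <= x) by (apply (le_INR 1); exact Hm).
  set (y := Rpower x delta).
  assert (Hy : 1 <= y).
  { unfold y. rewrite <- (Rpower_O x) by lra. apply Rle_Rpower; lra. }
  assert (Hlog : ln (INR (S m)) <= 1 + ln x).
  { assert (ln 2 <= 1) by (pose proof (ln_le_sub_1 2); lra).
    assert (Hle : INR (S m) <= 2 * x) by (rewrite S_INR; fold x; lra).
    apply Rle_trans with (ln (2 * x)); [|rewrite ln_mult by lra; lra].
    destruct Hle as [Hlt | ->]; [|lra].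
    apply Rlt_le, ln_increasing; [apply INR_S_pos | exact Hlt]. }
  assert (Hdl : delta * ln x <= y - 1).
  { unfold y. rewrite <- ln_Rpower. apply ln_le_sub_1, exp_pos. }
  pose proof (harm_le_1_ln m).
  apply (Rmult_le_reg_l delta); [exact Hdelta|].
  replace (delta * ((2 + / delta) * y)) with (2 * delta * y + y) by (field; lra).
  nra.
Qed.

Lemma decay_le_Rpower d l eps : 0 < eps -> exists C, forall m, (1 <= m)%nat ->
  decay d (S l) m <= C * Rpower (INR m) (- (INR l + 1 - eps)).
Proof.
  intros Heps. set (delta := eps / (INR d + 1)).
  pose proof (pos_INR d).
  assert (Hdelta : 0 < delta) by (apply Rdiv_lt_0_compat; lra).
  set (c := 2 + / delta).
  assert (Hc : 0 < c) by (pose proof (Rinv_0_lt_compat _ Hdelta); unfold c; lra).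
  exists (c ^ d). intros m Hm.
  assert (Hx : 1 <= INR m) by (apply (le_INR 1); exact Hm).
  assert (Hharm : harm m ^ d <= c ^ d * Rpower (INR m) eps).
  { eapply Rle_trans.
    - apply pow_incr. split; [pose proof (harm_ge1 m); lra|].
      apply (harm_le_Rpower delta m Hdelta Hm).
    - rewrite Rpow_mult_distr. apply Rmult_le_compat_l; [apply pow_le; lra|].
      rewrite <- Rpower_pow, Rpower_mult by apply exp_pos.
      apply Rle_Rpower; [exact Hx|]. unfold delta.
      apply (Rmult_le_reg_r (INR d + 1)); [lra|].
      replace (eps / (INR d + 1) * INR d * (INR d + 1)) with (eps * INR d) by (field; lra).
      nra. }
  replace (- (INR l + 1 - eps)) with (eps + - INR (S l)) by (rewrite S_INR; ring).
  rewrite Rpower_plus, Rpower_Ropp, Rpower_pow by lra.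
  assert (Hmpow : 0 < INR m ^ S l) by (apply pow_lt; lra).
  assert (INR m ^ S l <= INR (S m) ^ S l)
    by (apply pow_incr; split; [lra | apply le_INR; lia]).
  unfold decay, Rdiv. rewrite <- Rmult_assoc.
  apply Rmult_le_compat; [pose proof (harm_ge1 m); apply pow_le; lra
                         | apply Rlt_le, Rinv_0_lt_compat, pow_lt, INR_S_pos
                         | exact Hharm
                         | apply Rinv_le_contravar; assumption].
Qed.

Theorem proposition3p3 (p l : nat) (s : list C) :
  (1 <= p)%nat -> length s = p ->
  (forall si, In si s -> Cmod si < 1 \/ si = RtoC 1) ->
  forall eps : R, 0 < eps ->
  exists (K : R) (M : nat), forall m : nat, (M <= m)%nat ->
    Cmod (Deltan l (cseq (s ++ RtoC 0 :: nil)) m)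
      <= K * Rpower (INR m) (- (INR l + 1 - eps)).
Proof.
  intros _ _ Hs eps Heps.
  destruct (has_decay_cseq s Hs l) as [K [HK Hdecay]].
  destruct (decay_le_Rpower (length s) l eps Heps) as [C HC].
  exists (K * C), 1%nat. intros m Hm.
  eapply Rle_trans; [apply Hdecay|].
  rewrite Rmult_assoc. apply Rmult_le_compat_l; [exact HK | apply HC, Hm].
Qed.
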